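(* There is a function $\rho(\theta)$ with $\rho(\theta)\to1/3$ as $\theta\to0$ such that on every instance with largeness ratio $\theta$, the winning set $\chi_k$ selected by the polynomial-time mechanism described in the context satisfies $F(\chi_k)\ge\rho(\theta)F^\star$; i.e., the mechanism has approximation ratio $1/3$ in large markets.
   Context: Sellers $S=\{1,\dots,n\}$ each own one indivisible item and have a cost $c_i\ge0$. The buyer's utility is a monotone submodular $F:2^S\to\mathbb R_{\ge0}$, budget $B>0$; $c(T)=\sum_{i\in T}c_i$. $F^\star=\max\{F(T):c(T)\le B\}>0$; the largeness ratio is $\theta=\max_{s}F(\{s\})/F^\star$. Greedy sequence $\chi(F)=\langle x_1,\dots,x_n\rangle$: with $\chi_0=\emptyset$, $\chi_i=\{x_1,\dots,x_i\}$, $x_i$ maximizes $(F(\chi_{i-1}\cup\{s\})-F(\chi_{i-1}))/c_s$ over $s\notin\chi_{i-1}$ (ratio $+\infty$ if $c_s=0$; ties arbitrary); $\partial_i=F(\chi_i)-F(\chi_{i-1})$. Mechanism (winner selection): construct $\chi(F)$, let $k$ be the largest integer such that $F(\chi_k)\cdot c_{x_k}/\partial_k\le B/2$, and declare $\chi_k$ the set of winners. *)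

From HB Require Import structures.
From mathcomp Require Import all_boot all_order all_algebra.
From mathcomp Require Import all_classical all_reals all_analysis.
Set Implicit Arguments. Unset Strict Implicit. Unset Printing Implicit Defensive.
Import Order.TTheory GRing.Theory Num.Theory.
Local Open Scope ring_scope.

Section Market.
Variables (R : realType) (n : nat).
Implicit Types (F : {set 'I_n} -> R) (c : 'I_n -> R) (A T : {set 'I_n}).

Definition monotone_set F := forall A T, A \subset T -> F A <= F T.

Definition submodular F := forall A T, F (A :|: T) + F (A :&: T) <= F A + F T.

Definition cost c T := \sum_(i in T) c i.

(* F^* = max { F(T) : c(T) <= B }  (F >= 0, and the empty set is feasible) *)
Definition Fstar c F (B : R) := \big[Num.max/0]_(T : {set 'I_n} | cost c T <= B) F T.

Definition theta c F (B : R) := (\big[Num.max/0]_(s : 'I_n) F [set s]) / Fstar c F B.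

Definition marg F A (s : 'I_n) := F (s |: A) - F A.

(* "ratio of s >= ratio of t" w.r.t. A, with ratio +oo when the cost is 0 *)
Definition ratio_ge c F A (s t : 'I_n) : Prop :=
  c s = 0 \/ (c t != 0 /\ marg F A t / c t <= marg F A s / c s).

(* xs = <x_1,...,x_n> is a greedy sequence chi(F) (ties arbitrary):
   it enumerates all sellers, and the item in position i+1 maximizes the
   ratio among the sellers not in chi_i *)
Definition is_greedy c F (xs : seq 'I_n) : Prop :=
  perm_eq xs (enum 'I_n) /\
  forall i (x : 'I_n) rest, drop i xs = x :: rest ->
    forall t, t \notin take i xs -> ratio_ge c F [set y in take i xs] x t.

Definition chi (xs : seq 'I_n) (i : nat) : {set 'I_n} := [set y in take i xs].

(* the condition  F(chi_i) * c_{x_i} / partial_i <= B/2  (cross-multiplied;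
   i = 0 is the trivial fallback chi_0 = emptyset) *)
Definition sel_ok c F (B : R) (xs : seq 'I_n) (i : nat) : Prop :=
  i = 0%N \/
  exists (x : 'I_n) rest, drop i.-1 xs = x :: rest /\
    F (chi xs i) * c x <= B / 2 * (F (chi xs i) - F (chi xs i.-1)).

Definition is_winner_index c F (B : R) (xs : seq 'I_n) (k : nat) : Prop :=
  (k <= n)%N /\ sel_ok c F B xs k /\
  forall j, (k < j <= n)%N -> ~ sel_ok c F B xs j.

End Market.

(** The optimum [O] splits into the part already bought by the greedy prefix
    [chi_k] and the rest, and submodularity gives
    [F O <= F chi_k + sum_(o in O \ chi_k) marg o].  When the stopping rule
    rejects the next item [x], its ratio [marg x / c x] exceeds
    [2 F chi_(k+1) / B]; by greediness every [o] outside [chi_k] has no larger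
    ratio, and since [c O <= B] the whole sum is below [2 F chi_(k+1)].  As
    [F chi_(k+1) <= F chi_k + theta F*], this yields
    [F* <= 3 F chi_k + 2 theta F*], i.e. [F chi_k >= (1 - 2 theta) F* / 3]. *)

From HB Require Import structures.
From mathcomp Require Import all_boot all_order all_algebra.
From mathcomp Require Import all_classical all_reals all_analysis.
From mathcomp Require Import ring lra.
Set Implicit Arguments. Unset Strict Implicit. Unset Printing Implicit Defensive.
Import Order.TTheory GRing.Theory Num.Theory.
Import numFieldNormedType.Exports.
Local Open Scope classical_set_scope.
Local Open Scope ring_scope.

Definition large_market_ratio {R : realType} (x : R) : R := 3^-1 * (1 - 2 * x).

Lemma large_market_ratio_cvg (R : realType) :
  large_market_ratio x @[x --> (0:R)^'+] --> ((3%:R)^-1 : R).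
Proof.
apply: cvg_at_right_filter.
have -> : ((3%:R)^-1 : R) = large_market_ratio (0 : R).
  by rewrite /large_market_ratio mulr0 subr0 mulr1.
apply: cvgM; first exact: cvg_cst.
apply: cvgB; first exact: cvg_cst.
by apply: cvgM; [exact: cvg_cst | exact: cvg_id].
Qed.

Lemma Fstar_attained (R : realType) n (c : 'I_n -> R) F B :
  0 < Fstar c F B -> exists2 T, cost c T <= B & Fstar c F B <= F T.
Proof.
move=> Fs_gt0; have /bigmax_geP[|[T feasT leFT]] := lexx (Fstar c F B).
  by rewrite leNgt Fs_gt0.
by exists T.
Qed.

Section Submodular.
Variables (R : realType) (n : nat) (F : {set 'I_n} -> R).
Hypotheses (F_mono : monotone_set F) (F_sub : submodular F).

Lemma submodular_le_add_marg_seq A (s : seq 'I_n) :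
  F (A :|: [set:: s]) <= F A + \sum_(o <- s) marg F A o.
Proof.
elim: s => [|o s IH]; first by rewrite big_nil addr0 finset.set_nil finset.setU0.
rewrite big_cons finset.set_cons.
have -> : A :|: (o |: [set:: s]) = (o |: A) :|: (A :|: [set:: s]).
  by apply/finset.setP => y; rewrite !inE; case: (y \in A); rewrite ?orbT ?orbF.
have le_A_cap : F A <= F ((o |: A) :&: (A :|: [set:: s])).
  by apply: F_mono; rewrite finset.subsetI finset.subsetUr finset.subsetUl.
have := F_sub (o |: A) (A :|: [set:: s]); rewrite /marg; lra.
Qed.

Lemma submodular_le_add_marg A S :
  F (A :|: S) <= F A + \sum_(o in S) marg F A o.
Proof.
by have := submodular_le_add_marg_seq A (enum S); rewrite finset.set_enum big_enum.
Qed.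

Lemma submodular_setU1_le (x : 'I_n) A :
  (forall T, 0 <= F T) -> F (x |: A) <= F A + F [set x]%SET.
Proof.
by move=> F_ge0; have := F_sub [set x]%SET A; have := F_ge0 ([set x] :&: A)%SET; lra.
Qed.

End Submodular.

Section GreedyPrefix.
Variables (n : nat) (xs : seq 'I_n).

Lemma chiS k x rest : drop k xs = x :: rest -> chi xs k.+1 = x |: chi xs k.
Proof.
move=> Exs; have size_take_k : size (take k xs) = k.
  by rewrite size_take; case: ltnP => // /drop_oversize; rewrite Exs.
rewrite /chi -{1}(cat_take_drop k xs) Exs take_cat size_take_k ltnNge leqnSn subSnn /=.
by apply/finset.setP => y; rewrite take0 !inE mem_cat mem_seq1 orbC.
Qed.

Lemma chi_full : perm_eq xs (enum 'I_n) -> chi xs n = [set: 'I_n]%SET.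
Proof.
move=> xs_perm; apply/finset.setP => y.
rewrite !inE take_oversize ?(perm_size xs_perm) ?size_enum_ord //.
by rewrite (perm_mem xs_perm) mem_enum.
Qed.

End GreedyPrefix.

Lemma winner_next_rejected (R : realType) n (c : 'I_n -> R) F B xs k :
  perm_eq xs (enum 'I_n) -> is_winner_index c F B xs k -> (k < n)%N ->
  exists x rest, drop k xs = x :: rest /\
    B / 2 * (F (chi xs k.+1) - F (chi xs k)) < F (chi xs k.+1) * c x.
Proof.
move=> xs_perm [_ [_ k_max]] lt_kn.
case Exs: (drop k xs) => [|x rest].
  move: (congr1 size Exs); rewrite size_drop (perm_size xs_perm) size_enum_ord.
  by move=> /eqP; rewrite subn_eq0 leqNgt lt_kn.
exists x, rest; split=> //; rewrite ltNge; apply/negP => accepted.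
by apply: (k_max k.+1); [rewrite ltnSn | right; exists x, rest].
Qed.

Section Greedy.
Variables (R : realType) (n : nat) (c : 'I_n -> R) (F : {set 'I_n} -> R).
Variables (B : R) (xs : seq 'I_n).
Hypotheses (c_ge0 : forall i, 0 <= c i) (F_mono : monotone_set F).
Hypothesis xs_greedy : is_greedy c F xs.

Lemma greedy_marg_le k x rest o :
  drop k xs = x :: rest -> 0 < c x -> o \notin chi xs k ->
  marg F (chi xs k) o * c x <= marg F (chi xs k) x * c o.
Proof.
move=> Exs cx_gt0; rewrite inE => o_out.
have [cx0 | [co_neq0 le_ratio]] := xs_greedy.2 k x rest Exs o o_out.
  by move: cx_gt0; rewrite cx0 ltxx.
have co_gt0 : 0 < c o by rewrite lt_def co_neq0 c_ge0.
by move: le_ratio; rewrite ler_pdivrMr // mulrAC ler_pdivlMr.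
Qed.

Lemma greedy_sum_marg_le k x rest Opt :
  drop k xs = x :: rest -> 0 < c x -> cost c Opt <= B ->
  (\sum_(o in Opt :\: chi xs k) marg F (chi xs k) o) * c x <= marg F (chi xs k) x * B.
Proof.
move=> Exs cx_gt0 feasOpt; rewrite mulr_suml.
apply: (@le_trans _ _ (\sum_(o in Opt :\: chi xs k) marg F (chi xs k) x * c o)).
  apply: ler_sum => o /finset.setDP[_ o_out].
  exact: greedy_marg_le Exs cx_gt0 o_out.
rewrite -mulr_sumr ler_wpM2l //.
  by rewrite subr_ge0; apply: F_mono; apply: finset.subsetUr.
apply: le_trans feasOpt; rewrite /cost [X in _ <= X](big_setID (chi xs k)) /= lerDr.
exact: sumr_ge0.
Qed.

Lemma rejected_sum_marg_lt k x rest Opt :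
  0 < B -> drop k xs = x :: rest -> cost c Opt <= B ->
  B / 2 * (F (chi xs k.+1) - F (chi xs k)) < F (chi xs k.+1) * c x ->
  \sum_(o in Opt :\: chi xs k) marg F (chi xs k) o < 2 * F (chi xs k.+1).
Proof.
move=> B_gt0 Exs feasOpt rejected.
have marg_x : marg F (chi xs k) x = F (chi xs k.+1) - F (chi xs k) by rewrite /marg (chiS Exs).
have marg_x_ge0 : 0 <= marg F (chi xs k) x.
  by rewrite subr_ge0; apply: F_mono; apply: finset.subsetUr.
have cx_gt0 : 0 < c x.
  rewrite lt_def c_ge0 andbT; apply: contraTneq rejected => ->.
  by rewrite mulr0 -leNgt -marg_x mulr_ge0 // divr_ge0 // ltW.
rewrite -(ltr_pM2r cx_gt0).
have := greedy_sum_marg_le Exs cx_gt0 feasOpt; rewrite marg_x; lra.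
Qed.

End Greedy.

Lemma Fstar_le_winner (R : realType) n (c : 'I_n -> R) F B xs k :
  (forall i, 0 <= c i) -> (forall A, 0 <= F A) -> monotone_set F -> submodular F ->
  0 < B -> 0 < Fstar c F B -> is_greedy c F xs -> is_winner_index c F B xs k ->
  Fstar c F B <= 3 * F (chi xs k) + 2 * \big[Num.max/0]_(s : 'I_n) F [set s]%SET.
Proof.
move=> c_ge0 F_ge0 F_mono F_sub B_gt0 Fs_gt0 xs_greedy xs_winner.
have [Opt feasOpt le_Fs_O] := Fstar_attained Fs_gt0.
set m := \big[Num.max/0]_(s : 'I_n) F [set s]%SET.
have m_ge0 : 0 <= m by exact: bigmax_ge_id.
have [lt_kn | le_nk] := ltnP k n; last first.
  have -> : k = n by apply/eqP; rewrite eqn_leq xs_winner.1 le_nk.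
  rewrite chi_full; last exact: xs_greedy.1.
  have le_O_T := F_mono _ _ (finset.subsetT Opt).
  have := F_ge0 [set: 'I_n]%SET; lra.
have [x [rest [Exs rejected]]] := winner_next_rejected xs_greedy.1 xs_winner lt_kn.
have le_O_split : F Opt <= F (chi xs k :|: (Opt :\: chi xs k)).
  by apply/F_mono/fintype.subsetP => y yO; rewrite finset.in_setU finset.in_setD yO andbT orbN.
have le_gain := submodular_le_add_marg F_mono F_sub (chi xs k) (Opt :\: chi xs k).
have lt_gain := rejected_sum_marg_lt c_ge0 F_mono xs_greedy B_gt0 Exs feasOpt rejected.
have le_next : F (chi xs k.+1) <= F (chi xs k) + m.
  rewrite (chiS Exs); apply: le_trans (submodular_setU1_le F_sub x (chi xs k) F_ge0) _.
  by rewrite lerD2l; exact: le_bigmax.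
lra.
Qed.

Theorem lemma21 (R : realType) :
  exists rho : R -> R,
    (rho x @[x --> (0:R)^'+] --> ((3%:R)^-1 : R)) /\
    forall (n : nat) (c : 'I_n -> R) (F : {set 'I_n} -> R) (B : R),
      (forall i, 0 <= c i) ->
      (forall A, 0 <= F A) ->
      F finset.set0 = 0 ->
      monotone_set F ->
      submodular F ->
      0 < B ->
      0 < Fstar c F B ->
      forall (xs : seq 'I_n) (k : nat),
        is_greedy c F xs ->
        is_winner_index c F B xs k ->
        rho (theta c F B) * Fstar c F B <= F (chi xs k).
Proof.
exists large_market_ratio; split; first exact: large_market_ratio_cvg.
move=> n c F B c_ge0 F_ge0 _ F_mono F_sub B_gt0 Fs_gt0 xs k xs_greedy xs_winner.
have := Fstar_le_winner c_ge0 F_ge0 F_mono F_sub B_gt0 Fs_gt0 xs_greedy xs_winner.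
rewrite /large_market_ratio /theta.
set m := \big[Num.max/0]_(s : 'I_n) F [set s]%SET; set Fs := Fstar c F B.
have -> : 3^-1 * (1 - 2 * (m / Fs)) * Fs = 3^-1 * (Fs - 2 * m).
  by field; rewrite gt_eqF.
lra.
Qed.
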